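(* The following strict inclusions hold: (1) $\mathrm{SQC}^n\subsetneq \mathrm{CN}^n\subsetneq \mathrm{QC}^n$; (2) $\mathrm{QCP}^n\subsetneq \mathrm{CN}^n$; (3) $\mathrm{CONV}^n\subsetneq \mathrm{CN}^n$.
   Context: All functions considered are $f:\mathrm{dom}(f)\to\mathbb{R}$ with $\mathrm{dom}(f)\subseteq\mathbb{R}^n$ convex. $f$ is quasiconvex if $f(z)\le\max\{f(x),f(y)\}$ for all $x,y\in\mathrm{dom}(f)$, $z\in(x,y)$; strictly quasiconvex if $f(z)<\max\{f(x),f(y)\}$ for all such $x,y,z$ (with $x\ne y$). $\mathrm{QC}^n$, $\mathrm{SQC}^n$, $\mathrm{CONV}^n$ denote the classes of quasiconvex, strictly quasiconvex, and convex functions respectively. $\mathrm{QCP}^n$ is the class of quasiconvex polynomials $\mathbb{R}^n\to\mathbb{R}$ with real coefficients and nonzero degree. A function $f$ is conic if for all $y,z\in\mathrm{dom}(f)$ and all $t\ge 0$ with $f(y)\le f(z)$ and $z+t(z-y)\in\mathrm{dom}(f)$, we have $f(z+t(z-y))\ge f(z)$; $\mathrm{CN}^n$ denotes the class of conic functions. *)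

From Stdlib Require Fin.
From Stdlib Require Import Reals.
Open Scope R_scope.

Definition vec (n : nat) := Fin.t n -> R.

Definition lerp {n : nat} (x y : vec n) (t : R) : vec n :=
  fun i => x i + t * (y i - x i).

(* A (partial) function f : dom(f) -> R, dom(f) ⊆ R^n, is modelled by the
   pair (D, f) with D : vec n -> Prop its domain and f : vec n -> R whose
   values outside D are irrelevant.  All classes below only inspect f on D. *)
Definition convex_set {n : nat} (D : vec n -> Prop) : Prop :=
  forall x y t, D x -> D y -> 0 <= t <= 1 -> D (lerp x y t).

Definition quasiconvex {n : nat} (D : vec n -> Prop) (f : vec n -> R) : Prop :=
  convex_set D /\
  forall x y s, D x -> D y -> 0 < s < 1 ->
    f (lerp x y s) <= Rmax (f x) (f y).

Definition strictly_quasiconvex {n : nat} (D : vec n -> Prop) (f : vec n -> R) : Prop :=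
  convex_set D /\
  forall x y s, D x -> D y -> x <> y -> 0 < s < 1 ->
    f (lerp x y s) < Rmax (f x) (f y).

Definition convex_fun {n : nat} (D : vec n -> Prop) (f : vec n -> R) : Prop :=
  convex_set D /\
  forall x y t, D x -> D y -> 0 <= t <= 1 ->
    f (lerp x y t) <= (1 - t) * f x + t * f y.

Definition conic {n : nat} (D : vec n -> Prop) (f : vec n -> R) : Prop :=
  convex_set D /\
  forall y z t, D y -> D z -> 0 <= t -> f y <= f z ->
    D (fun i => z i + t * (z i - y i)) ->
    f (fun i => z i + t * (z i - y i)) >= f z.

Inductive is_poly {n : nat} : (vec n -> R) -> Prop :=
| poly_const (c : R) : is_poly (fun _ => c)
| poly_var (i : Fin.t n) : is_poly (fun x => x i)
| poly_add (f g : vec n -> R) : is_poly f -> is_poly g -> is_poly (fun x => f x + g x)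
| poly_mul (f g : vec n -> R) : is_poly f -> is_poly g -> is_poly (fun x => f x * g x).

(* Over R, a
   polynomial has degree 0 (or is the zero polynomial) iff its polynomial
   function is constant, so "nonzero degree" = not a constant function. *)
Definition QCP {n : nat} (D : vec n -> Prop) (f : vec n -> R) : Prop :=
  (forall x, D x) /\ is_poly f /\ (exists x y, f x <> f y) /\ quasiconvex D f.

Definition subclass {n : nat} (A B : (vec n -> Prop) -> (vec n -> R) -> Prop) : Prop :=
  forall D f, A D f -> B D f.

Definition strict_subclass {n : nat} (A B : (vec n -> Prop) -> (vec n -> R) -> Prop) : Prop :=
  subclass A B /\ exists D f, B D f /\ ~ A D f.

(* The inclusions all come from looking at f along the line through y and z.
   If w = z + t (z - y), then z lies on the segment [y, w], so strict
   quasiconvexity or convexity forbids f w < f z once f y <= f z, and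
   conversely conicity applied to (x, z) at the right t recovers
   quasiconvexity on [x, y].  For a quasiconvex polynomial, f w < f z forces
   f to be constant on the segment (y, z); its restriction to the line is a
   univariate polynomial, hence constant everywhere, a contradiction.
   Strictness is witnessed by a constant function, by the indicator of a
   half-space (quasiconvex, not conic), and by x |-> (x_1)^3 (conic, since
   it is a strictly increasing function of one coordinate, but not convex). *)

From Stdlib Require Import Reals Lra Lia List FunctionalExtensionality Classical.
Open Scope R_scope.

Section Lines.

Context {n : nat}.
Implicit Types (x y z : vec n) (D : vec n -> Prop) (f : vec n -> R).

Lemma lerp0 x y : lerp x y 0 = x.
Proof. apply functional_extensionality; intros i; unfold lerp; ring. Qed.

Lemma lerp1 x y : lerp x y 1 = y.
Proof. apply functional_extensionality; intros i; unfold lerp; ring. Qed.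

Lemma lerp_same x t : lerp x x t = x.
Proof. apply functional_extensionality; intros i; unfold lerp; ring. Qed.

Lemma lerp_extend x y t :
  (fun i => y i + t * (y i - x i)) = lerp x y (1 + t).
Proof. apply functional_extensionality; intros i; unfold lerp; ring. Qed.

Lemma lerp_from_start x y r c :
  r <> 0 -> lerp x (lerp x y r) (c / r) = lerp x y c.
Proof. intros Hr; apply functional_extensionality; intros i; unfold lerp; field; lra. Qed.

Lemma lerp_between x y a b c :
  a <> b -> lerp (lerp x y a) (lerp x y b) ((c - a) / (b - a)) = lerp x y c.
Proof. intros Hab; apply functional_extensionality; intros i; unfold lerp; field; lra. Qed.

Lemma lerp_eq_start x y t : t <> 0 -> lerp x y t = x -> y = x.
Proof.
  intros Ht E; apply functional_extensionality; intros i.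
  pose proof (equal_f E i) as Ei; unfold lerp in Ei.
  destruct (Rmult_integral t (y i - x i)); lra.
Qed.

Lemma quasiconvex_line D f x y a b c :
  quasiconvex D f -> D (lerp x y a) -> D (lerp x y b) -> a < c < b ->
  f (lerp x y c) <= Rmax (f (lerp x y a)) (f (lerp x y b)).
Proof.
  intros [_ Hqc] Ha Hb Hc.
  rewrite <- (lerp_between x y a b c) by lra.
  apply Hqc; auto.
  split; [apply Rdiv_lt_0_compat; lra|].
  apply Rmult_lt_reg_r with (b - a); [lra|].
  unfold Rdiv; rewrite Rmult_assoc, Rinv_l; lra.
Qed.

(* Conicity only has content for a point beyond z, i.e. w = lerp y z r, r > 1. *)
Lemma conic_intro D f :
  convex_set D ->
  (forall y z r, D y -> D z -> 1 < r -> f y <= f z -> D (lerp y z r) ->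
     f z <= f (lerp y z r)) ->
  conic D f.
Proof.
  intros HD Hbeyond; split; [exact HD|].
  intros y z t Hy Hz Ht Hyz; rewrite lerp_extend; intros Hw.
  destruct (Req_dec t 0) as [->|Ht0].
  - rewrite Rplus_0_r, lerp1; lra.
  - apply Rle_ge, Hbeyond; auto; lra.
Qed.

Lemma inv_in_unit_interval r : 1 < r -> 0 < 1 / r < 1.
Proof.
  intros Hr; split; [apply Rdiv_lt_0_compat; lra|].
  apply Rmult_lt_reg_r with r; [lra|].
  unfold Rdiv; rewrite Rmult_assoc, Rinv_l; lra.
Qed.

Lemma strictly_quasiconvex_conic D f : strictly_quasiconvex D f -> conic D f.
Proof.
  intros [HD Hsqc]; apply conic_intro; [exact HD|].
  intros y z r Hy _ Hr Hyz Hw.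
  destruct (classic (z = y)) as [->|Hzy]; [rewrite lerp_same; lra|].
  assert (Hyw : y <> lerp y z r).
  { intros E; apply Hzy, (lerp_eq_start y z r); auto; lra. }
  pose proof (Hsqc _ _ _ Hy Hw Hyw (inv_in_unit_interval r Hr)) as Hlt.
  rewrite lerp_from_start, lerp1 in Hlt by lra.
  unfold Rmax in Hlt; destruct Rle_dec; lra.
Qed.

Lemma convex_conic D f : convex_fun D f -> conic D f.
Proof.
  intros [HD Hcvx]; apply conic_intro; [exact HD|].
  intros y z r Hy _ Hr Hyz Hw.
  pose proof (inv_in_unit_interval r Hr) as Hs.
  pose proof (Hcvx _ _ (1 / r) Hy Hw ltac:(lra)) as Hle.
  rewrite lerp_from_start, lerp1 in Hle by lra.
  nra.
Qed.

Lemma conic_quasiconvex D f : conic D f -> quasiconvex D f.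
Proof.
  intros [HD Hconic]; split; [exact HD|].
  intros x y s Hx Hy Hs.
  assert (Hz : D (lerp x y s)) by (apply HD; auto; lra).
  destruct (Rle_lt_dec (f (lerp x y s)) (f x)) as [Hle|Hlt].
  { eapply Rle_trans; [exact Hle|apply Rmax_l]. }
  assert (Ey : (fun i => lerp x y s i + (1 - s) / s * (lerp x y s i - x i)) = y).
  { apply functional_extensionality; intros i; unfold lerp; field; lra. }
  assert (Ht : 0 <= (1 - s) / s) by (left; apply Rdiv_lt_0_compat; lra).
  pose proof (Hconic _ _ _ Hx Hz Ht ltac:(lra)) as Hge.
  rewrite Ey in Hge; specialize (Hge Hy).
  eapply Rle_trans; [apply Rge_le, Hge|apply Rmax_r].
Qed.

End Lines.

Section UnivariatePolynomials.

(* Coefficient lists, constant term first. *)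
Fixpoint peval (p : list R) (s : R) : R :=
  match p with nil => 0 | a :: q => a + s * peval q s end.

Fixpoint padd (p q : list R) : list R :=
  match p, q with
  | nil, _ => q
  | _, nil => p
  | a :: p', b :: q' => (a + b) :: padd p' q'
  end.

Fixpoint pmul (p q : list R) : list R :=
  match p with
  | nil => nil
  | a :: p' => padd (map (Rmult a) q) (0 :: pmul p' q)
  end.

Lemma peval_padd p q s : peval (padd p q) s = peval p s + peval q s.
Proof.
  revert q; induction p as [|a p IH]; intros [|b q]; simpl; try ring.
  rewrite IH; ring.
Qed.

Lemma peval_scale a q s : peval (map (Rmult a) q) s = a * peval q s.
Proof. induction q as [|b q IH]; simpl; [ring|rewrite IH; ring]. Qed.

Lemma peval_pmul p q s : peval (pmul p q) s = peval p s * peval q s.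
Proof.
  induction p as [|a p IH]; simpl; [ring|].
  rewrite peval_padd, peval_scale; simpl; rewrite IH; ring.
Qed.

Lemma peval_bounded_unit p : exists B, forall s, 0 < s < 1 -> Rabs (peval p s) <= B.
Proof.
  induction p as [|a q [B HB]].
  - exists 0; intros s _; simpl; rewrite Rabs_R0; lra.
  - exists (Rabs a + B); intros s Hs; simpl.
    eapply Rle_trans; [apply Rabs_triang|].
    rewrite Rabs_mult, (Rabs_right s) by lra.
    pose proof (HB s Hs); pose proof (Rabs_pos (peval q s)); nra.
Qed.

Lemma Rabs_le_mult_unit_eq0 a B : (forall s, 0 < s < 1 -> Rabs a <= s * B) -> a = 0.
Proof.
  intros H.
  set (s := Rabs a / (2 * (Rabs a + Rabs B + 1))).
  pose proof (Rabs_pos a); pose proof (Rle_abs B); pose proof (Rabs_pos B).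
  assert (Hs : s * (2 * (Rabs a + Rabs B + 1)) = Rabs a) by (unfold s; field; lra).
  destruct (Req_dec a 0) as [|Ha]; [assumption|].
  pose proof (Rabs_pos_lt a Ha).
  assert (Hpos : 0 < s) by (apply Rdiv_lt_0_compat; lra).
  specialize (H s ltac:(nra)); nra.
Qed.

Lemma peval_eq0_unit p : (forall s, 0 < s < 1 -> peval p s = 0) -> forall s, peval p s = 0.
Proof.
  induction p as [|a q IH]; intros H; simpl; [reflexivity|].
  destruct (peval_bounded_unit q) as [B HB].
  assert (Ha : a = 0).
  { apply Rabs_le_mult_unit_eq0 with B; intros s Hs.
    replace a with (- (s * peval q s)) by (specialize (H s Hs); simpl in H; lra).
    rewrite Rabs_Ropp, Rabs_mult, (Rabs_right s) by lra.
    apply Rmult_le_compat_l; [lra|auto]. }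
  assert (Hq : forall s, peval q s = 0).
  { apply IH; intros s Hs; specialize (H s Hs); simpl in H.
    destruct (Rmult_integral s (peval q s)); lra. }
  intros s; rewrite Ha, Hq; ring.
Qed.

Lemma peval_const_unit p c : (forall s, 0 < s < 1 -> peval p s = c) -> forall s, peval p s = c.
Proof.
  intros H s.
  assert (E : forall s, peval (padd p (- c :: nil)) s = peval p s - c)
    by (intros; rewrite peval_padd; simpl; ring).
  assert (Hdiff : forall s', 0 < s' < 1 -> peval (padd p (- c :: nil)) s' = 0)
    by (intros s' Hs'; rewrite E, H; auto; ring).
  pose proof (peval_eq0_unit _ Hdiff s) as Z; rewrite E in Z; lra.
Qed.

End UnivariatePolynomials.

Lemma is_poly_lerp {n : nat} (f : vec n -> R) :
  is_poly f -> forall y z, exists p, forall s, f (lerp y z s) = peval p s.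
Proof.
  induction 1 as [c|i|f g _ IHf _ IHg|f g _ IHf _ IHg]; intros y z.
  - exists (c :: nil); intros s; simpl; ring.
  - exists (y i :: (z i - y i) :: nil); intros s; unfold lerp; simpl; ring.
  - destruct (IHf y z) as [p Hp], (IHg y z) as [q Hq].
    exists (padd p q); intros s; rewrite peval_padd, Hp, Hq; ring.
  - destruct (IHf y z) as [p Hp], (IHg y z) as [q Hq].
    exists (pmul p q); intros s; rewrite peval_pmul, Hp, Hq; ring.
Qed.

Lemma QCP_conic {n : nat} D (f : vec n -> R) : QCP D f -> conic D f.
Proof.
  intros [HD [Hpoly [_ Hqc]]]; apply conic_intro; [apply Hqc|].
  intros y z r _ _ Hr Hyz _.
  apply Rnot_lt_le; intros Hlt.
  assert (Hline : forall a b c, a < c < b ->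
      f (lerp y z c) <= Rmax (f (lerp y z a)) (f (lerp y z b)))
    by (intros; apply quasiconvex_line with D; auto).
  assert (Hy : f y = f z).
  { pose proof (Hline 0 r 1 ltac:(lra)) as H; rewrite lerp0, lerp1 in H.
    unfold Rmax in H; destruct Rle_dec; lra. }
  (* On (y, z) quasiconvexity bounds f by f z from above, and z in (u, w)
     with f w < f z bounds f u by f z from below. *)
  assert (Hflat : forall s, 0 < s < 1 -> f (lerp y z s) = f z).
  { intros s Hs.
    pose proof (Hline 0 1 s Hs) as Hup; rewrite lerp0, lerp1, Hy, Rmax_left in Hup by lra.
    pose proof (Hline s r 1 ltac:(lra)) as Hlow; rewrite lerp1 in Hlow.
    unfold Rmax in Hlow; destruct Rle_dec; lra. }
  destruct (is_poly_lerp f Hpoly y z) as [p Hp].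
  pose proof (peval_const_unit p (f z) ltac:(intros s Hs; rewrite <- Hp; auto) r)
    as Hconst.
  rewrite <- Hp in Hconst; lra.
Qed.

Section Examples.

Variable m : nat.
Let T : vec (S m) -> Prop := fun _ => True.

Lemma convex_set_full : convex_set T.
Proof. intros ? ? ? ? ? ?; exact I. Qed.

Lemma conic_const c : conic T (fun _ => c).
Proof. split; [exact convex_set_full|intros; lra]. Qed.

Lemma not_strictly_quasiconvex_const c : ~ strictly_quasiconvex T (fun _ => c).
Proof.
  intros [_ H].
  assert (Hne : (fun _ : Fin.t (S m) => 0) <> (fun _ => 1))
    by (intros E; pose proof (equal_f E Fin.F1); lra).
  specialize (H _ _ (1 / 2) I I Hne ltac:(lra)).
  rewrite Rmax_left in H; lra.
Qed.

Lemma not_QCP_const c : ~ QCP T (fun _ => c).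
Proof. intros [_ [_ [[x [y H]] _]]]; apply H; reflexivity. Qed.

Lemma quasiconvex_coord_nondecr (g : R -> R) (i : Fin.t (S m)) :
  (forall a b, a <= b -> g a <= g b) -> quasiconvex T (fun x => g (x i)).
Proof.
  intros Hg; split; [exact convex_set_full|].
  intros x y s _ _ Hs; unfold lerp.
  assert (Hbetween : x i + s * (y i - x i) <= x i \/ x i + s * (y i - x i) <= y i)
    by (destruct (Rle_dec (x i) (y i)); [right|left]; nra).
  destruct Hbetween as [Hx|Hy].
  - eapply Rle_trans; [apply Hg, Hx|apply Rmax_l].
  - eapply Rle_trans; [apply Hg, Hy|apply Rmax_r].
Qed.

Lemma conic_coord_incr (g : R -> R) (i : Fin.t (S m)) :
  (forall a b, a < b -> g a < g b) -> conic T (fun x => g (x i)).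
Proof.
  intros Hg; split; [exact convex_set_full|].
  intros y z t _ _ Ht Hyz _.
  assert (Hle : y i <= z i)
    by (apply Rnot_lt_le; intros Hlt; specialize (Hg _ _ Hlt); lra).
  destruct (Req_dec (t * (z i - y i)) 0) as [->|Hne].
  - rewrite Rplus_0_r; lra.
  - apply Rgt_ge, Hg; assert (0 <= t * (z i - y i)) by nra; lra.
Qed.

Definition indicator_pos (a : R) : R := if Rle_dec a 0 then 0 else 1.

Lemma not_conic_indicator_pos :
  ~ conic T (fun x => indicator_pos (x Fin.F1)).
Proof.
  intros [_ H].
  specialize (H (fun _ => 2) (fun _ => 1) 2 I I ltac:(lra)).
  unfold indicator_pos in H.
  destruct (Rle_dec 2 0); [lra|]; destruct (Rle_dec 1 0); [lra|].
  specialize (H ltac:(lra) I).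
  destruct (Rle_dec (1 + 2 * (1 - 2)) 0); lra.
Qed.

Lemma cube_incr a b : a < b -> a ^ 3 < b ^ 3.
Proof.
  intros Hab.
  assert (Hq : 0 < a * a + a * b + b * b).
  { destruct (Req_dec b 0) as [->|Hb]; [nra|].
    assert (0 < b * b) by nra; nra. }
  replace (b ^ 3) with (a ^ 3 + (b - a) * (a * a + a * b + b * b)) by ring.
  nra.
Qed.

Lemma not_convex_cube : ~ convex_fun T (fun x => (x Fin.F1) ^ 3).
Proof.
  intros [_ H].
  specialize (H (fun _ => -2) (fun _ => 0) (1 / 2) I I ltac:(lra)).
  unfold lerp in H; simpl in H; lra.
Qed.

End Examples.

Theorem mainTheorem2 (n : nat) (hn : (1 <= n)%nat) :
  (@strict_subclass n strictly_quasiconvex conic /\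
   @strict_subclass n conic quasiconvex) /\
  @strict_subclass n QCP conic /\
  @strict_subclass n convex_fun conic.
Proof.
  destruct n as [|m]; [lia|].
  split; [split|split]; split.
  - exact strictly_quasiconvex_conic.
  - exists (fun _ => True), (fun _ => 0).
    split; [apply conic_const|apply not_strictly_quasiconvex_const].
  - exact conic_quasiconvex.
  - exists (fun _ => True), (fun x => indicator_pos (x Fin.F1)); split.
    + apply quasiconvex_coord_nondecr; intros a b Hab; unfold indicator_pos.
      destruct (Rle_dec a 0), (Rle_dec b 0); lra.
    + apply not_conic_indicator_pos.
  - exact QCP_conic.
  - exists (fun _ => True), (fun _ => 0).
    split; [apply conic_const|apply not_QCP_const].
  - exact convex_conic.
  - exists (fun _ => True), (fun x => (x Fin.F1) ^ 3).
    split; [apply (conic_coord_incr m (fun a => a ^ 3)), cube_incr|apply not_convex_cube].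
Qed.
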